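(* In the setting described in the context, for any $w_N \in \mathcal V_N$ with coefficient tensor $W$ and the Galerkin solution $u_N \in \mathcal V_N$, \[ \|u_N - w_N\|_{\mathcal A_+} \leq (\check c_{\vartheta \rho}^+)^{-1}\, \eta_{\mathrm{disc}}(w_N). \]
   Context: Let $D\subset\mathbb R^d$ be a bounded Lipschitz domain, $\mathcal X=H^1_0(D)$, $f\in L^2(D)$. Let $\Gamma=\mathbb R^L$ ($L\ge M$), $\gamma=\bigotimes_{\ell=1}^L\gamma_\ell$ with $\gamma_\ell=N(0,1)$, and for given $\sigma_\ell\ge1$ let $\gamma_{\vartheta\rho}=\bigotimes_\ell N(0,\sigma_\ell^2)$. For $\mu\in\mathbb N_0^L$, $H_\mu(y)=\prod_\ell H_{\mu_\ell}(y_\ell)$ with $H_{n}(y_\ell)=h_{n}(y_\ell/\sigma_\ell)$, $h_n$ the normalized probabilists' Hermite polynomials (so $(H_\mu)$ is orthonormal in $L^2(\Gamma,\gamma_{\vartheta\rho})$). Let $\mathcal V_{\vartheta\rho}=L^2(\Gamma,\gamma_{\vartheta\rho};\mathcal X)$ and $\|v\|^2_{L^2(\Gamma,\gamma;\mathcal X)}=\int_\Gamma\|\nabla v(\cdot,y)\|^2_{L^2(D)}d\gamma(y)$. Let $a_{\Delta,s}:D\times\Gamma\to\mathbb R$ be a coefficient polynomial in $y$, $B(v,w)=\int_\Gamma\int_D a_{\Delta,s}\nabla v\cdot\nabla w\,dx\,d\gamma_{\vartheta\rho}$ (the bilinear form of $\mathcal A_+$), assumed bounded on $\mathcal V_{\vartheta\rho}$,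 with energy norm $\|v\|_{\mathcal A_+}=B(v,v)^{1/2}$ and coercivity constant $\check c^+_{\vartheta\rho}>0$ such that $\check c^+_{\vartheta\rho}\|v\|_{L^2(\Gamma,\gamma;\mathcal X)}\le\|v\|_{\mathcal A_+}$ for all $v\in\mathcal V_{\vartheta\rho}$. Let $\{\varphi_0,\dots,\varphi_{N-1}\}\subset\mathcal X$ be a finite element basis, $d_1,\dots,d_M\in\mathbb N$, $\Lambda=\{\mu\in\mathbb N_0^L:\mu_m<d_m\ (m\le M),\ \mu_\ell=0\ (\ell>M)\}$, and $\mathcal V_N=\mathrm{span}\{\varphi_iH_\mu\}$; elements $v_N=\sum_{i,\mu}V(i,\mu)\varphi_iH_\mu$ are identified with tensors $V\in\mathbb R^{N\times d_1\times\cdots\times d_M}$. The Galerkin solution $u_N\in\mathcal V_N$ (tensor $U$) satisfies $B(u_N,v)=\int_\Gamma\int_D fv\,dx\,d\gamma_{\vartheta\rho}$ for all $v\in\mathcal V_N$. For $w_N$ with tensor $W$ define $\mathbf A(W)(i,\mu)=B(w_N,\varphi_iH_\mu)$ and $F(i,\mu)=\int_\Gamma\int_D f\varphi_iH_\mu\,dx\,d\gamma_{\vartheta\rho}$. Let $\mathbf H_{\vartheta\rho\to0}=Z_0\otimes Z_1\otimes\cdots\otimes Z_M$ acting on $\mathbb R^{N\times d_1\times\cdots\times d_M}$, with $Z_0(i,j)=\int_D\nabla\varphi_i\cdot\nabla\varphi_j\,dx$ and $Z_m(\mu_m,\mu_m')=\int_{\mathbb R}H_{\mu_m}(y_m)H_{\mu_m'}(y_m)\,d\gamma_m(y_m)$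 (symmetric positive definite), and $\mathbf H_{\vartheta\rho\to0}^{-1/2}$ its inverse square root. The algebraic estimator is $\eta_{\mathrm{disc}}(w_N)=\|\mathbf H_{\vartheta\rho\to0}^{-1/2}(\mathbf A(W)-F)\|_{\ell^2}$ (Euclidean norm of the tensor). *)

From HB Require Import structures.
From mathcomp Require Import all_boot all_order all_algebra.
From mathcomp Require Import reals.
Set Implicit Arguments. Unset Strict Implicit. Unset Printing Implicit Defensive.
Import Order.TTheory GRing.Theory Num.Theory.
Local Open Scope ring_scope.

(* Multi-index set Lambda: mu_m < d_m for m = 1..M (indexed by 'I_M), mu_l = 0 for l > M
   (the trailing zero entries are implicit). *)
Definition Lam (M : nat) (d : 'I_M -> nat) : finType := {dffun forall m : 'I_M, 'I_(d m)}.
Arguments Lam : clear implicits.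

(* Index set of the coefficient tensors in R^{N x d_1 x ... x d_M}. *)
Definition Idx (N M : nat) (d : 'I_M -> nat) : finType := ('I_N * Lam M d)%type.
Arguments Idx : clear implicits.

Definition kronH (R : nzRingType) (N M : nat) (d : 'I_M -> nat)
  (Z0 : 'M[R]_N) (Z : forall m : 'I_M, 'M[R]_(d m)) (k l : Idx N M d) : R :=
  Z0 k.1 l.1 * \prod_(m < M) Z m (k.2 m) (l.2 m).

Definition mx_of (R : nzRingType) (T : finType) (A : T -> T -> R) : 'M[R]_#|T| :=
  \matrix_(a, b) A (enum_val a) (enum_val b).
Definition cv_of (R : nzRingType) (T : finType) (v : T -> R) : 'cV[R]_#|T| :=
  \col_a v (enum_val a).

Definition spd (R : realFieldType) (n : nat) (A : 'M[R]_n) : Prop :=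
  A^T = A /\ forall x : 'cV[R]_n, x != 0 -> 0 < (x^T *m A *m x) 0 0.

Definition is_inv_sqrt (R : realFieldType) (n : nat) (H S : 'M[R]_n) : Prop :=
  H \in unitmx /\ spd S /\ S *m S = invmx H.

Definition eucl_norm (R : rcfType) (n : nat) (x : 'cV[R]_n) : R :=
  Num.sqrt (\sum_i x i 0 ^+ 2).

Definition bilinear_form (R : nzRingType) (V : lmodType R) (B : V -> V -> R) : Prop :=
  (forall a u v w, B (a *: u + v) w = a * B u w + B v w) /\
  (forall a u v w, B w (a *: u + v) = a * B w u + B w v).
Definition linear_fun (R : nzRingType) (V : lmodType R) (l : V -> R) : Prop :=
  forall a u v, l (a *: u + v) = a * l u + l v.

Definition synth (R : nzRingType) (V : lmodType R) (T : finType) (e : T -> V) (W : T -> R) : V :=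
  \sum_k W k *: e k.

Definition enorm (R : rcfType) (V : lmodType R) (B : V -> V -> R) (v : V) : R :=
  Num.sqrt (B v v).

Definition eta_disc (R : rcfType) (T : finType) (S : 'M[R]_#|T|) (AW F : T -> R) : R :=
  eucl_norm (S *m cv_of (fun k => AW k - F k)).

From HB Require Import structures.
From mathcomp Require Import all_boot all_order all_algebra.
From mathcomp Require Import reals.
From mathcomp Require Import ring lra.
Set Implicit Arguments. Unset Strict Implicit. Unset Printing Implicit Defensive.
Import Order.TTheory GRing.Theory Num.Theory.
Local Open Scope ring_scope.

(* Let v = u_N - w_N have coefficient vector x = U - W and let r = A(W) - F.
   Galerkin orthogonality gives B(v, v) = - x^T r.  With H = Z_0 (x) ... (x) Z_M
   and S = H^{-1/2}, Cauchy-Schwarz gives |x^T r| = |(S H x)^T (S r)|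
   <= (x^T H x)^{1/2} eta_disc(w_N), and x^T H x is the squared
   L^2(Gamma, gamma; X)-norm of v, which coercivity bounds by ||v||_{A+} / c.
   Hence ||v||_{A+}^2 <= ||v||_{A+} eta_disc(w_N) / c. *)

Section CauchySchwarz.
Variable R : rcfType.

Lemma sum_mul_sqr_le n (a b : 'I_n -> R) :
  (\sum_i a i * b i) ^+ 2 <= (\sum_i a i ^+ 2) * (\sum_i b i ^+ 2).
Proof.
set A := \sum_i a i ^+ 2; set B := \sum_i b i ^+ 2; set C := \sum_i a i * b i.
have AB_ij : A * B = \sum_i \sum_j a i ^+ 2 * b j ^+ 2.
  by rewrite big_distrl; apply: eq_bigr => i _; rewrite big_distrr.
have AB_ji : A * B = \sum_i \sum_j a j ^+ 2 * b i ^+ 2.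
  rewrite mulrC big_distrl; apply: eq_bigr => i _; rewrite big_distrr.
  by apply: eq_bigr => j _; rewrite mulrC.
have CC : C ^+ 2 = \sum_i \sum_j (a i * b i) * (a j * b j).
  by rewrite expr2 big_distrl; apply: eq_bigr => i _; rewrite big_distrr.
have lagrange : \sum_i \sum_j (a i * b j - a j * b i) ^+ 2 = A * B *+ 2 - C ^+ 2 *+ 2.
  rewrite mulr2n {1}AB_ij AB_ji mulr2n CC -!big_split -sumrB /=.
  apply: eq_bigr => i _; rewrite -!big_split -sumrB /=.
  by apply: eq_bigr => j _; ring.
have : 0 <= \sum_i \sum_j (a i * b j - a j * b i) ^+ 2.
  by apply: sumr_ge0 => i _; apply: sumr_ge0 => j _; apply: sqr_ge0.
by rewrite lagrange !mulr2n; lra.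
Qed.

Lemma dotmxE n (u v : 'cV[R]_n) : (u^T *m v) 0 0 = \sum_i u i 0 * v i 0.
Proof. by rewrite !mxE; apply: eq_bigr => i _; rewrite !mxE. Qed.

Lemma eucl_normE n (u : 'cV[R]_n) : eucl_norm u = Num.sqrt ((u^T *m u) 0 0).
Proof. by rewrite /eucl_norm dotmxE; under eq_bigr do rewrite expr2. Qed.

Lemma eucl_norm_ge0 n (u : 'cV[R]_n) : 0 <= eucl_norm u.
Proof. exact: sqrtr_ge0. Qed.

Lemma cauchy_schwarz_mx n (u v : 'cV[R]_n) :
  `|(u^T *m v) 0 0| <= eucl_norm u * eucl_norm v.
Proof.
rewrite /eucl_norm dotmxE -sqrtrM; last by apply: sumr_ge0 => i _; apply: sqr_ge0.
by rewrite -sqrtr_sqr ler_wsqrtr // sum_mul_sqr_le.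
Qed.

(* With y = S H^T x: x^T r = y^T (S r) and y^T y = x^T H x. *)
Lemma dotmx_le_inv_sqrt n (H S : 'M[R]_n) (x r : 'cV[R]_n) :
  H \in unitmx -> S^T = S -> S *m S = invmx H ->
  `|(x^T *m r) 0 0| <= Num.sqrt ((x^T *m H *m x) 0 0) * eucl_norm (S *m r).
Proof.
move=> H_unit S_sym SS; set y := S *m (H^T *m x).
have y_dot (z : 'cV[R]_n) : y^T *m (S *m z) = x^T *m z.
  rewrite /y !trmx_mul trmxK S_sym -!mulmxA (mulmxA S S) SS.
  by rewrite (mulmxA H) mulmxV // mul1mx.
have Hx_sym : (x^T *m H^T *m x) 0 0 = (x^T *m H *m x) 0 0.
  have -> : x^T *m H^T *m x = (x^T *m H *m x)^T by rewrite !trmx_mul trmxK mulmxA.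
  by rewrite mxE.
by rewrite -Hx_sym -mulmxA -(y_dot r) -(y_dot (H^T *m x)) -eucl_normE cauchy_schwarz_mx.
Qed.
End CauchySchwarz.

Lemma sum_enum_val (Z : nmodType) (T : finType) (F : T -> Z) :
  \sum_(a < #|T|) F (enum_val a) = \sum_k F k.
Proof. by rewrite (big_enum_val (A := T)). Qed.

Section CoefficientVectors.
Variables (R : comNzRingType) (T : finType).

Lemma dot_cv_of (X Y : T -> R) :
  ((cv_of X)^T *m cv_of Y) 0 0 = \sum_k X k * Y k.
Proof.
by rewrite mxE -[RHS]sum_enum_val; apply: eq_bigr => a _; rewrite !mxE.
Qed.

Lemma quad_mx_of (X : T -> R) (K : T -> T -> R) :
  ((cv_of X)^T *m mx_of K *m cv_of X) 0 0 = \sum_k \sum_l X k * X l * K k l.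
Proof.
rewrite mxE exchange_big -[RHS]sum_enum_val; apply: eq_bigr => b _.
rewrite mxE big_distrl -[RHS]sum_enum_val; apply: eq_bigr => a _.
by rewrite !mxE mulrAC.
Qed.
End CoefficientVectors.

Section Synthesis.
Variables (R : nzRingType) (V : lmodType R) (T : finType) (e : T -> V).

Lemma linear_fun_synth (f : V -> R) (X : T -> R) :
  linear_fun f -> f (synth e X) = \sum_k X k * f (e k).
Proof.
move=> f_lin.
have f0 : f 0 = 0.
  have := f_lin 1 0 0; rewrite scaler0 addr0 mul1r -{1}[f 0]addr0.
  by move/addrI.
have fD : {morph f : u v / u + v} by move=> u v; rewrite -{1}[u]scale1r f_lin mul1r.
rewrite /synth (big_morph f fD f0); apply: eq_bigr => k _.
by rewrite -[_ *: _]addr0 f_lin f0 addr0.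
Qed.

Lemma bilinear_synthl (B : V -> V -> R) (X : T -> R) (w : V) :
  bilinear_form B -> B (synth e X) w = \sum_k X k * B (e k) w.
Proof. by case=> B_linl _; apply: linear_fun_synth (fun a u v => B_linl a u v w). Qed.

Lemma bilinear_synthr (B : V -> V -> R) (X : T -> R) (w : V) :
  bilinear_form B -> B w (synth e X) = \sum_k X k * B w (e k).
Proof. by case=> _ B_linr; apply: linear_fun_synth (fun a u v => B_linr a u v w). Qed.

Lemma synthB (X Y : T -> R) :
  synth e (fun k => X k - Y k) = synth e X - synth e Y.
Proof. by rewrite /synth -sumrB; apply: eq_bigr => k _; rewrite scalerBl. Qed.

Lemma bilinear_synth_quad (G : V -> V -> R) (X : T -> R) :
  bilinear_form G ->
  G (synth e X) (synth e X) = \sum_k \sum_l X k * X l * G (e k) (e l).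
Proof.
move=> G_bil; rewrite bilinear_synthl //; apply: eq_bigr => k _.
by rewrite bilinear_synthr // big_distrr; apply: eq_bigr => l _; rewrite /= mulrA.
Qed.

Lemma galerkin_error_energy (B : V -> V -> R) (ell : V -> R) (U W : T -> R) :
  bilinear_form B -> linear_fun ell ->
  (forall X, B (synth e U) (synth e X) = ell (synth e X)) ->
  let v := synth e (fun k => U k - W k) in
  B v v = - \sum_k (U k - W k) * (B (synth e W) (e k) - ell (e k)).
Proof.
move=> B_bil ell_lin galerkin v.
have -> : B v v = B (synth e U) v - B (synth e W) v.
  by rewrite !bilinear_synthl // -sumrB; apply: eq_bigr => k _; rewrite mulrBl.
rewrite galerkin linear_fun_synth // bilinear_synthr // -sumrB -sumrN.
by apply: eq_bigr => k _; rewrite mulrBr opprB.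
Qed.
End Synthesis.

(* If b > 0 then (sqrt b)^2 = b <= g eta <= sqrt b eta / c; divide by sqrt b. *)
Lemma sqrtr_le_coercive (R : rcfType) (b g eta c : R) :
  0 < c -> 0 <= eta -> 0 <= g -> b <= g * eta -> c * g <= Num.sqrt b ->
  Num.sqrt b <= c^-1 * eta.
Proof.
move=> c_gt0 eta_ge0 g_ge0 b_le coer.
have [b_le0 | b_gt0] := lerP b 0.
  by rewrite ler0_sqrtr // mulr_ge0 // invr_ge0 ltW.
have s_gt0 : 0 < Num.sqrt b by rewrite sqrtr_gt0.
have ss : Num.sqrt b * Num.sqrt b = b by rewrite -expr2 sqr_sqrtr // ltW.
rewrite mulrC ler_pdivlMr //.
move: s_gt0 ss b_le coer; move: (Num.sqrt b) => s; nra.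
Qed.

Theorem mainTheorem3
  (R : realType) (V : lmodType R)          (* V plays the role of V_{theta rho} *)
  (N M : nat) (d : 'I_M -> nat)
  (B : V -> V -> R)                        (* bilinear form of A_+ *)
  (G : V -> V -> R)                        (* inner product of L^2(Gamma,gamma;X) *)
  (ell : V -> R)                           (* v |-> int int f v dx dgamma_{theta rho} *)
  (c : R)                                  (* coercivity constant c^+_{theta rho} *)
  (Z0 : 'M[R]_N) (Z : forall m : 'I_M, 'M[R]_(d m))
  (e : Idx N M d -> V)                     (* e (i, mu) = phi_i H_mu *)
  (S : 'M[R]_#|Idx N M d|)                 (* H_{theta rho -> 0}^{-1/2} *)
  (U W : Idx N M d -> R) :
  (forall m, (0 < d m)%N) ->
  bilinear_form B ->
  (forall u v, B u v = B v u) ->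
  bilinear_form G ->
  (forall v, 0 <= G v v) ->
  linear_fun ell ->
  0 < c ->
  (forall v, c * Num.sqrt (G v v) <= enorm B v) ->
  spd Z0 -> (forall m, spd (Z m)) ->
  (forall k l, G (e k) (e l) = kronH Z0 Z k l) ->
  is_inv_sqrt (mx_of (kronH Z0 Z)) S ->
  (forall X : Idx N M d -> R, B (synth e U) (synth e X) = ell (synth e X)) ->
  enorm B (synth e U - synth e W)
    <= c^-1 * eta_disc S (fun k => B (synth e W) (e k)) (fun k => ell (e k)).
Proof.
move=> _ B_bil _ G_bil _ ell_lin c_gt0 coer _ _ G_gram [H_unit [[S_sym _] SS]] galerkin.
rewrite -synthB; set X := fun k => U k - W k; set v := synth e X.
set eta := eta_disc _ _ _.
have G_quad : G v v = ((cv_of X)^T *m mx_of (kronH Z0 Z) *m cv_of X) 0 0.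
  rewrite bilinear_synth_quad // quad_mx_of.
  by under eq_bigr do under eq_bigr do rewrite G_gram.
have energy_le : B v v <= Num.sqrt (G v v) * eta.
  rewrite (galerkin_error_energy W B_bil ell_lin galerkin) -dot_cv_of G_quad.
  apply: le_trans (ler_norm _) _; rewrite normrN.
  exact: dotmx_le_inv_sqrt.
exact: sqrtr_le_coercive c_gt0 (eucl_norm_ge0 _) (sqrtr_ge0 _) energy_le (coer v).
Qed.
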